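(* Let $k\ge 2$, $p\in(0,1)$, $q=1-p$, and $M^{(k)}(z)=\sum_{n\ge1}M^{(k)}_n(p)z^n$. Then $$M^{(k)}(z)=\frac{z}{(1-z)^2}\left(k-\frac1q\right)+\frac{z}{1-z}\cdot\frac pq\cdot\frac{1}{1-\frac1q S^{(k)}(p^{k-1}qz)}$$ as formal power series in $z$.
   Context: Matchbox process: fix integers $k\ge 2$, $n\ge 1$ and $p\in(0,1)$, $q=1-p$. Initially $k$ boxes each contain $n$ matches. At each time step, independently of the past, with probability $p$ a match is removed from a box currently containing the largest number of matches, and with probability $q$ from a box currently containing the smallest number of matches (ties broken arbitrarily). The process is run until the first time some box is empty; the residue is the total number of matches in the other $k-1$ boxes at that time, and $M^{(k)}_n(p)$ is its expectation. For $i\ge1$, $s^{(k)}_i=\frac{k-1}{ki-1}\binom{ki-1}{i-1}$ and $S^{(k)}(z)=\sum_{i\ge1}s^{(k)}_iz^i$. *)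

From mathcomp Require Import all_boot all_order all_algebra.
From mathcomp Require Import reals.
Set Implicit Arguments. Unset Strict Implicit. Unset Printing Implicit Defensive.
Import Order.TTheory GRing.Theory Num.Theory.

Section Matchbox.
Variable R : realType.
Local Open Scope ring_scope.

(* A state is the sequence of box contents (length k). *)

Definition box_max (s : seq nat) : nat := (\max_(x <- s) x)%N.
Definition box_min (s : seq nat) : nat := \big[minn/head 0%N s]_(x <- s) x.

(* index of (the first) box with the largest / smallest number of matches;
   ties are broken by taking the first such box (the law of the residue
   does not depend on the tie-breaking rule). *)
Definition imax (s : seq nat) : nat := index (box_max s) s.
Definition imin (s : seq nat) : nat := index (box_min s) s.

Definition take_match (s : seq nat) (i : nat) : seq nat :=
  set_nth 0%N s i (nth 0%N s i).-1.

(* expected residue starting from state s, with p = prob. of taking from a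
   largest box, q = 1 - p from a smallest box; fuel bounds the number of
   steps (fuel = total number of matches is always enough). *)
Fixpoint exp_residue (p : R) (fuel : nat) (s : seq nat) : R :=
  if (0%N \in s) then (sumn s)%:R
  else match fuel with
       | 0%N => (sumn s)%:R
       | f.+1 => p * exp_residue p f (take_match s (imax s))
                 + (1 - p) * exp_residue p f (take_match s (imin s))
       end.

Definition M (k n : nat) (p : R) : R := exp_residue p (k * n) (nseq k n).

Definition fps := nat -> R.

Definition fps_const (c : R) : fps := fun n => if n == 0%N then c else 0.
Definition fps_X : fps := fun n => if n == 1%N then 1 else 0.
Definition fps_add (f g : fps) : fps := fun n => f n + g n.
Definition fps_opp (f : fps) : fps := fun n => - f n.
Definition fps_scal (c : R) (f : fps) : fps := fun n => c * f n.
Definition fps_mul (f g : fps) : fps :=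
  fun n => \sum_(i < n.+1) f i * g (n - i)%N.
(* substitution z |-> c z *)
Definition fps_subst_scal (c : R) (f : fps) : fps := fun n => c ^+ n * f n.

Fixpoint inv_coefs (f : fps) (n : nat) : seq R :=
  match n with
  | 0%N => [:: (f 0%N)^-1]
  | n'.+1 => let s := inv_coefs f n' in
      rcons s (- (f 0%N)^-1 *
               \sum_(1 <= i < n'.+2) f i * nth 0 s (n'.+1 - i)%N)
  end.
Definition fps_inv (f : fps) : fps := fun n => nth 0 (inv_coefs f n) n.

Definition s_coef (k i : nat) : R :=
  (k.-1)%:R / (k * i).-1%:R * ('C((k * i).-1, i.-1))%:R.
Definition S_fps (k : nat) : fps := fun i => if i == 0%N then 0 else s_coef k i.

Definition M_fps (k : nat) (p : R) : fps :=
  fun n => if n == 0%N then 0 else M k n p.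

Definition rhs_fps (k : nat) (p : R) : fps :=
  let q := 1 - p in
  let one_minus_z := fps_add (fps_const 1) (fps_opp fps_X) in
  fps_add
    (fps_scal (k%:R - q^-1)
       (fps_mul fps_X (fps_inv (fps_mul one_minus_z one_minus_z))))
    (fps_scal (p / q)
       (fps_mul (fps_mul fps_X (fps_inv one_minus_z))
          (fps_inv (fps_add (fps_const 1)
             (fps_opp (fps_scal q^-1
                (fps_subst_scal (p ^+ k.-1 * q) (S_fps k)))))))).
End Matchbox.

From mathcomp Require Import all_boot all_order all_algebra.
From mathcomp Require Import reals.
From mathcomp Require Import ring zify.
Import Order.TTheory GRing.Theory Num.Theory.
Set Implicit Arguments. Unset Strict Implicit. Unset Printing Implicit Defensive.

(* Up to the order of the boxes, every configuration reached from [n] equal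
   boxes consists of one box holding the minimum [a] and [k - 1 = m] boxes
   differing by at most one, with some total excess [D] over [m a]. Taking from
   a largest box lowers [D] by one; taking from the smallest one lowers [a] and
   raises [D] by [m]. The expected residue is therefore the solution of a
   linear recursion in [(a, D)], which is solved by cutting the process at its
   visits to uniform configurations ([D = 0]): from excess [D], the weight of
   first reaching one after [j] removals from the smallest box is a generalized
   ballot number times [p^(D + m j) q^j], and the levels of the successive
   uniform configurations form a renewal sequence whose generating function is
   [1 / (1 - S(p^m q z) / q)]. Summing over visited levels produces the factor
   [z / (1 - z)], and the drift of the residue produces [z / (1 - z)^2 (k - 1/q)]. *)

Lemma box_max_eq s v : v \in s -> {in s, forall x, x <= v} -> box_max s = v.
Proof.
move=> vs sv; apply/eqP; rewrite eqn_leq; apply/andP; split.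
  by apply/bigmax_leqP_seq => x xs _; apply: sv.
exact: (leq_bigmax_seq (F := id) v vs).
Qed.

Lemma box_max_cons a s x : x \in s -> a <= x -> box_max (a :: s) = box_max s.
Proof.
move=> xs ax; rewrite /box_max big_cons; apply/maxn_idPr.
exact: leq_trans ax (leq_bigmax_seq (F := id) x xs _).
Qed.

Lemma box_max_in s : s != [::] -> box_max s \in s.
Proof.
rewrite /box_max; elim: s => [//|y s IH] _; rewrite big_cons.
have [->|s0] := eqVneq s [::]; first by rewrite big_nil maxn0 mem_head.
by rewrite in_cons /maxn; case: ltnP => _; rewrite ?eqxx // IH ?orbT.
Qed.

Lemma box_min_le s x : x \in s -> box_min s <= x.
Proof.
rewrite /box_min; move: (head 0 s) => y.
elim: s => [//|z s IH]; rewrite inE big_cons => /orP[/eqP->|/IH].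
  exact: geq_minl.
exact: leq_trans (geq_minr _ _).
Qed.

Lemma box_min_in s : s != [::] -> box_min s \in s.
Proof.
case: s => [//|y s _]; rewrite /box_min /=.
suff : \big[minn/y]_(x <- y :: s) x \in y :: y :: s by rewrite !inE orbA orbb.
elim: (y :: s) => [|z t IH]; first by rewrite big_nil mem_head.
rewrite big_cons /minn; case: ltnP => _; first by rewrite !inE eqxx orbT.
by move: IH; rewrite !inE => /orP[->|->]; rewrite ?orbT.
Qed.

Lemma box_min_eq s v : v \in s -> {in s, forall x, v <= x} -> box_min s = v.
Proof.
move=> vs sv; apply/eqP; rewrite eqn_leq (box_min_le vs) /=.
by apply: sv; apply: box_min_in; case: s vs.
Qed.

Lemma box_max_perm s t : perm_eq s t -> box_max s = box_max t.
Proof. exact: perm_big. Qed.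

Lemma box_min_perm s t : perm_eq s t -> box_min s = box_min t.
Proof.
case: s => [|y s] st; first by case: t st => // ? ? /perm_size.
have t0 : t != [::] by case: t st => // /perm_size.
apply: box_min_eq; first by rewrite (perm_mem st) box_min_in.
by move=> x; rewrite (perm_mem st); apply: box_min_le.
Qed.

Lemma perm_rem (x : nat) s t : perm_eq s t -> perm_eq (rem x s) (rem x t).
Proof. by move=> st; apply/permP => P; rewrite !count_rem (permP st) (perm_mem st). Qed.

Lemma perm_rem_cons (x a : nat) s : x \in s -> perm_eq (rem x (a :: s)) (a :: rem x s).
Proof.
move=> xs; apply/permP => P; rewrite !count_rem in_cons xs orbT /=.
rewrite (permP (perm_to_rem xs)) /=; lia.
Qed.

Lemma perm_take_match s i : i < size s ->
  perm_eq (take_match s i) ((nth 0 s i).-1 :: rem (nth 0 s i) s).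
Proof.
move=> ltis; have /permP ex := perm_to_rem (mem_nth 0 ltis).
set x := nth 0 s i in ex *.
have es : s = take i s ++ x :: drop i.+1 s by rewrite -drop_nth // cat_take_drop.
rewrite /take_match set_nthE ltis -/x; apply/permP => P.
by move: (ex P); rewrite {1}es /= !count_cat /=; lia.
Qed.

Lemma perm_take_max s : s != [::] ->
  perm_eq (take_match s (imax s)) ((box_max s).-1 :: rem (box_max s) s).
Proof.
by move/box_max_in=> ms; rewrite -(nth_index 0 ms) perm_take_match ?index_mem.
Qed.

Lemma perm_take_min s : s != [::] ->
  perm_eq (take_match s (imin s)) ((box_min s).-1 :: rem (box_min s) s).
Proof.
by move/box_min_in=> ms; rewrite -(nth_index 0 ms) perm_take_match ?index_mem.
Qed.

Section ExpResidue.
Variables (R : realType) (p : R).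
Local Open Scope ring_scope.

Lemma exp_residue_stop f s : (0 \in s)%N || (f == 0)%N -> exp_residue p f s = (sumn s)%:R.
Proof. by case: f => [|f] /=; case: ifP; rewrite ?orbF // => ->. Qed.

Lemma exp_residue_step f s : (0 \notin s)%N -> exp_residue p f.+1 s =
  p * exp_residue p f (take_match s (imax s))
  + (1 - p) * exp_residue p f (take_match s (imin s)).
Proof. by move=> s0; rewrite /= (negbTE s0). Qed.

Lemma exp_residue_perm f s t : perm_eq s t -> exp_residue p f s = exp_residue p f t.
Proof.
elim: f s t => [|f IH] s t st; first by rewrite !exp_residue_stop ?orbT // (perm_sumn st).
have [s0|s0] := boolP (0 \in s)%N.
  by rewrite !exp_residue_stop -?(perm_mem st) ?s0 // (perm_sumn st).
have t0 : (0 \notin t)%N by rewrite -(perm_mem st).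
case: s st s0 => [|x s] st s0; first by case: t st {t0} => // ? ? /perm_size.
have sn : x :: s != [::] by [].
have tn : t != [::] by case: t st {t0} => // /perm_size.
rewrite !exp_residue_step // (IH _ _ (perm_take_max sn)) (IH _ _ (perm_take_min sn)).
rewrite (IH _ _ (perm_take_max tn)) (IH _ _ (perm_take_min tn)).
have rem_st v : perm_eq (v.-1 :: rem v (x :: s)) (v.-1 :: rem v t).
  by rewrite perm_cons perm_rem.
by rewrite (box_max_perm st) (box_min_perm st) !(IH _ _ (rem_st _)).
Qed.

End ExpResidue.

Section BalancedStates.
Variable m : nat.
Hypothesis m_gt0 : 0 < m.

Definition balanced H := nseq (H %% m) (H %/ m).+1 ++ nseq (m - H %% m) (H %/ m).

(* [state a D]: one box holds the minimum [a], the [m] others are balanced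
   and hold [D] matches more than [m] boxes of size [a] would. *)
Definition state a D := a :: balanced (m * a + D).

Lemma balanced_eq c r : r <= m -> balanced (c * m + r) = nseq r c.+1 ++ nseq (m - r) c.
Proof.
rewrite leq_eqVlt => /orP[/eqP->|ltrm].
  rewrite subnn cats0 (_ : c * m + m = c.+1 * m + 0); last by rewrite mulSn addn0 addnC.
  by rewrite /balanced modnMDl mod0n divnMDl // div0n addn0 subn0.
by rewrite /balanced divnMDl // divn_small // addn0 modnMDl modn_small.
Qed.

Lemma sumn_balanced H : sumn (balanced H) = H.
Proof.
have := ltn_pmod H m_gt0; have := divn_eq H m.
move: (H %/ m) (H %% m) => c r -> ltrm.
rewrite balanced_eq ?(ltnW ltrm) // sumn_cat !sumn_nseq.
have : c * r <= c * m by rewrite leq_mul2l ltnW ?orbT.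
rewrite mulnBr mulSn; lia.
Qed.

Lemma mem_balanced H x : x \in balanced H -> H %/ m <= x.
Proof. by rewrite mem_cat !mem_nseq => /orP[] /andP[_ /eqP->]. Qed.

Lemma sumn_state a D : sumn (state a D) = a + (m * a + D).
Proof. by rewrite /= sumn_balanced. Qed.

Lemma state_lb a D x : x \in state a D -> a <= x.
Proof.
rewrite inE => /orP[/eqP-> //|/mem_balanced]; apply: leq_trans.
by rewrite leq_divRL // mulnC leq_addr.
Qed.

Lemma state_zero_free a D : 0 \notin state a.+1 D.
Proof. by apply/negP => /state_lb. Qed.

Lemma state_min a D : box_min (state a D) = a.
Proof. by apply: box_min_eq; [exact: mem_head | exact: state_lb]. Qed.

Lemma state0_nseq a : state a 0 = nseq m.+1 a.
Proof. by rewrite /state addn0 mulnC -[a * m]addn0 balanced_eq // subn0. Qed.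

Lemma state0_max_min a : box_max (state a 0) = box_min (state a 0).
Proof.
rewrite state_min state0_nseq; apply: box_max_eq; first exact: mem_head.
by move=> x; rewrite mem_nseq => /andP[_ /eqP->].
Qed.

Lemma rem_min_state a D :
  (box_min (state a.+1 D)).-1 :: rem (box_min (state a.+1 D)) (state a.+1 D)
  = state a (D + m).
Proof. by rewrite state_min /state /= eqxx; congr (_ :: balanced _); nia. Qed.

Lemma rem_max_balanced H :
  perm_eq ((box_max (balanced H.+1)).-1 :: rem (box_max (balanced H.+1)) (balanced H.+1))
          (balanced H).
Proof.
rewrite (divn_eq H m) -addnS.
have := ltn_pmod H m_gt0; move: (H %/ m) (H %% m) => c r ltrm.
rewrite !balanced_eq ?(ltnW ltrm) //.
have -> : box_max (nseq r.+1 c.+1 ++ nseq (m - r.+1) c) = c.+1.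
  apply: box_max_eq; first by rewrite mem_cat mem_nseq eqxx.
  by move=> x; rewrite mem_cat !mem_nseq => /orP[] /andP[_ /eqP->].
by rewrite /= eqxx -(subnSK ltrm) /= -cat1s perm_catCA.
Qed.

Lemma rem_max_state a D :
  perm_eq ((box_max (state a D.+1)).-1 :: rem (box_max (state a D.+1)) (state a D.+1))
          (state a D).
Proof.
have bn : balanced (m * a + D.+1) != [::].
  by rewrite -size_eq0 size_cat !size_nseq subnKC -?lt0n // ltnW // ltn_pmod.
have ab : a <= box_max (balanced (m * a + D.+1)).
  by apply: (state_lb (D := D.+1)); rewrite inE box_max_in ?orbT.
rewrite /state (box_max_cons (box_max_in bn) ab) addnS; rewrite addnS in bn.
set v := box_max _; set b := balanced _.
apply: perm_trans (_ : perm_eq _ (v.-1 :: a :: rem v b)) _.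
  by rewrite perm_cons; apply: perm_rem_cons; apply: box_max_in.
by rewrite -[v.-1 :: _]/([:: v.-1] ++ [:: a] ++ rem v b) perm_catCA perm_cons rem_max_balanced.
Qed.

End BalancedStates.

Section ResidueOnStates.
Variables (R : realType) (p : R) (m : nat) (Phi : nat -> nat -> R).
Hypothesis m_gt0 : (0 < m)%N.
Local Open Scope ring_scope.
Hypothesis Phi_empty : forall D, Phi 0%N D = D%:R.
Hypothesis Phi_uniform : forall a, Phi a.+1 0%N = Phi a m.
Hypothesis Phi_step : forall a D,
  Phi a.+1 D.+1 = p * Phi a.+1 D + (1 - p) * Phi a (D.+1 + m).

Lemma exp_residue_state fuel a D : (m.+1 * a + D <= fuel)%N ->
  exp_residue p fuel (state m a D) = Phi a D.
Proof.
elim: fuel a D => [|f IH] a D le_fuel.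
  have [-> ->] : a = 0%N /\ D = 0%N by lia.
  by rewrite Phi_empty exp_residue_stop ?mem_head // sumn_state // muln0.
case: a le_fuel => [|a] le_fuel.
  by rewrite Phi_empty exp_residue_stop ?mem_head // sumn_state // muln0.
rewrite exp_residue_step ?state_zero_free //.
have sn : state m a.+1 D != [::] by [].
rewrite (exp_residue_perm _ _ (perm_take_max sn)) (exp_residue_perm _ _ (perm_take_min sn)).
rewrite rem_min_state //; case: D le_fuel sn => [|D] le_fuel sn.
  by rewrite state0_max_min // rem_min_state // IH ?Phi_uniform; [ring | nia].
by rewrite (exp_residue_perm _ _ (rem_max_state m_gt0 _ _)) !IH ?Phi_step //; nia.
Qed.

End ResidueOnStates.

Section FirstHit.
Variables (R : realType) (p : R) (m : nat).
Local Open Scope ring_scope.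
Local Notation q := (1 - p).

(* [ballot D j] counts the ways of going from excess [D] to excess [0] with
   exactly [j] removals from a smallest box (a generalized ballot number). *)
Definition ballot (D j : nat) : R :=
  if j is j'.+1 then
    'C(D + m.+1 * j - 1, j)%:R - m%:R * 'C(D + m.+1 * j - 1, j')%:R
  else 1.

Lemma ballot0S j : ballot 0%N j.+1 = 0.
Proof.
rewrite /ballot add0n; set N := (m.+1 * j.+1 - 1)%N.
have := mul_bin_left N j.
rewrite (_ : N - j = j.+1 * m)%N ?mulnA; last by rewrite /N; nia.
by move/eqP; rewrite -mulnA eqn_pmul2l // => /eqP->; rewrite natrM subrr.
Qed.

Lemma ballotSS D j : ballot D.+1 j.+1 = ballot D j.+1 + ballot (D + m.+1) j.
Proof.
case: j => [|j].
  rewrite /ballot !muln1 !bin1 !bin0 !subn1 !addnS /= !natrD; ring.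
rewrite /ballot; set N := (D + m.+1 * j.+2 - 1)%N.
have -> : (D.+1 + m.+1 * j.+2 - 1 = N.+1)%N by rewrite /N; nia.
have -> : (D + m.+1 + m.+1 * j.+1 - 1 = N)%N by rewrite /N; nia.
by rewrite !binS !natrD; ring.
Qed.

Definition first_hit (D j : nat) : R := ballot D j * p ^+ (D + m * j) * q ^+ j.

Lemma first_hit00 : first_hit 0%N 0%N = 1.
Proof. by rewrite /first_hit /= muln0 !expr0 !mulr1. Qed.

Lemma first_hit0S j : first_hit 0%N j.+1 = 0.
Proof. by rewrite /first_hit ballot0S !mul0r. Qed.

Lemma first_hitS0 D : first_hit D.+1 0%N = p * first_hit D 0%N.
Proof. by rewrite /first_hit /= !muln0 !addn0 !mul1r !mulr1 exprS. Qed.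

Lemma first_hitSS D j :
  first_hit D.+1 j.+1 = p * first_hit D j.+1 + q * first_hit (D.+1 + m) j.
Proof.
rewrite /first_hit ballotSS -addSnnS.
have -> : (D.+1 + m * j.+1 = (D + m * j.+1).+1)%N by [].
have -> : (D.+1 + m + m * j = (D + m * j.+1).+1)%N by nia.
by rewrite !exprS; ring.
Qed.

End FirstHit.

Section ResidueFormula.
Variables (R : realType) (p : R) (m : nat).
Local Open Scope ring_scope.
Local Notation q := (1 - p).
Hypothesis q_neq0 : q != 0.

Definition excursion (i : nat) : R := if i is i'.+1 then first_hit p m m i' else 0.

(* The renewal sequence of the excursion law: [P n] is the probability of
   passing through the uniform configuration [n] levels below the start. *)
Variable P : nat -> R.
Hypothesis P0 : P 0%N = 1.
Hypothesis PS : forall n, P n.+1 = \sum_(i < n.+1) excursion i.+1 * P (n - i)%N.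

Definition visits n := \sum_(i < n) P i.

Definition hit_visits a D := \sum_(j < a) first_hit p m D j * visits (a - j).

Definition residue_formula a D :=
  D%:R + a%:R * (m.+1%:R - q^-1) + p / q * hit_visits a D.

Lemma visits0 : visits 0%N = 0.
Proof. exact: big_ord0. Qed.

Lemma visitsS n : visits n.+1 = visits n + P n.
Proof. by rewrite /visits big_ord_recr. Qed.

Lemma visits_renewal a : visits a.+1 = 1 + \sum_(j < a) excursion j.+1 * visits (a - j).
Proof.
elim: a => [|a IH]; first by rewrite visitsS visits0 big_ord0 P0 add0r addr0.
rewrite visitsS IH PS -addrA; congr (_ + _).
rewrite [in RHS](eq_bigr (fun j : 'I_a.+1 =>
  excursion j.+1 * visits (a - j) + excursion j.+1 * P (a - j)%N)); last first.
  by move=> j _; rewrite subSn ?leq_ord // visitsS mulrDr.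
by rewrite big_split /= [in RHS]big_ord_recr /= subnn visits0 mulr0 addr0.
Qed.

Lemma hit_visits0 D : hit_visits 0%N D = 0.
Proof. by rewrite /hit_visits big_ord0. Qed.

Lemma hit_visits_at0 a : hit_visits a 0%N = visits a.
Proof.
case: a => [|a]; first by rewrite hit_visits0 visits0.
rewrite /hit_visits big_ord_recl first_hit00 mul1r subn0 big1 ?addr0 //.
by move=> i _; rewrite first_hit0S mul0r.
Qed.

Lemma hit_visits_uniform a : hit_visits a.+1 0%N = 1 + hit_visits a m.
Proof.
rewrite /hit_visits big_ord_recl first_hit00 mul1r subn0 big1 ?addr0; last first.
  by move=> i _; rewrite first_hit0S mul0r.
by rewrite visits_renewal.
Qed.

Lemma hit_visits_step a D :
  hit_visits a.+1 D.+1 = p * hit_visits a.+1 D + q * hit_visits a (D.+1 + m).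
Proof.
rewrite /hit_visits !big_ord_recl /= first_hitS0 subn0 mulrDr -!mulrA -addrA.
congr (_ + _); rewrite !mulr_sumr -big_split /=; apply: eq_bigr => i _.
by rewrite subSS first_hitSS; ring.
Qed.

Lemma residue_formula_empty D : residue_formula 0%N D = D%:R.
Proof. by rewrite /residue_formula hit_visits0 mul0r mulr0 !addr0. Qed.

Lemma residue_formula_uniform a : residue_formula a.+1 0%N = residue_formula a m.
Proof.
rewrite /residue_formula hit_visits_uniform -[a.+1%:R]natr1 -[m.+1%:R]natr1.
by field.
Qed.

Lemma residue_formula_step a D : residue_formula a.+1 D.+1 =
  p * residue_formula a.+1 D + q * residue_formula a (D.+1 + m).
Proof.
rewrite /residue_formula hit_visits_step natrD.
rewrite -[a.+1%:R]natr1 -[m.+1%:R]natr1 -[D.+1%:R]natr1.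
by field.
Qed.

End ResidueFormula.

Section PowerSeries.
Variable R : realType.
Local Open Scope ring_scope.
Implicit Types f g : fps R.

Lemma size_inv_coefs f n : size (inv_coefs f n) = n.+1.
Proof. by elim: n => [//|n IH] /=; rewrite size_rcons IH. Qed.

Lemma nth_inv_coefs f n i : (i <= n)%N -> nth 0 (inv_coefs f n) i = fps_inv f i.
Proof.
elim: n => [|n IH]; first by rewrite leqn0 => /eqP->.
rewrite leq_eqVlt => /orP[/eqP-> //|lt_in].
by rewrite /= nth_rcons size_inv_coefs lt_in IH.
Qed.

Lemma fps_invS f n : fps_inv f n.+1 =
  - (f 0%N)^-1 * \sum_(1 <= i < n.+2) f i * fps_inv f (n.+1 - i)%N.
Proof.
rewrite /fps_inv /= nth_rcons size_inv_coefs ltnn eqxx; congr (_ * _).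
apply: eq_big_nat => i /andP[i_gt0 _]; rewrite nth_inv_coefs //.
by rewrite leq_subLR -addn1 addnC leq_add2r.
Qed.

Lemma fps_mulX0 g : fps_mul (fps_X R) g 0%N = 0.
Proof. by rewrite /fps_mul big_ord1 /fps_X /= mul0r. Qed.

Lemma fps_mulXS g n : fps_mul (fps_X R) g n.+1 = g n.
Proof.
rewrite /fps_mul big_ord_recl big_ord_recl big1 ?addr0; last first.
  by move=> i _; rewrite /fps_X /bump /= mul0r.
by rewrite /fps_X /bump /= mul0r add0r mul1r subn1.
Qed.

Definition one_minus_X : fps R := fps_add (fps_const 1) (fps_opp (fps_X R)).

Lemma one_minus_X0 : one_minus_X 0%N = 1.
Proof. by rewrite /one_minus_X /fps_add /fps_opp /fps_const /fps_X /= subr0. Qed.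

Lemma one_minus_X1 : one_minus_X 1%N = -1.
Proof. by rewrite /one_minus_X /fps_add /fps_opp /fps_const /fps_X /= add0r. Qed.

Lemma one_minus_XSS n : one_minus_X n.+2 = 0.
Proof. by rewrite /one_minus_X /fps_add /fps_opp /fps_const /fps_X /= subr0. Qed.

Lemma inv_one_minus_X n : fps_inv one_minus_X n = 1.
Proof.
elim: n => [|n IH]; first by rewrite /fps_inv /= one_minus_X0 invr1.
rewrite fps_invS big_nat_recl // big1_seq => [|[|i]]; rewrite ?mem_index_iota //.
  by rewrite one_minus_X0 one_minus_X1 subn1 IH invr1 addr0 mulr1 mulN1r opprK.
by rewrite one_minus_XSS mul0r.
Qed.

Definition square_one_minus_X := fps_mul one_minus_X one_minus_X.

Lemma square_one_minus_X0 : square_one_minus_X 0%N = 1.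
Proof. by rewrite /square_one_minus_X /fps_mul big_ord1 one_minus_X0 mulr1. Qed.

Lemma square_one_minus_X1 : square_one_minus_X 1%N = -2.
Proof.
rewrite /square_one_minus_X /fps_mul big_ord_recl big_ord1 /=.
by rewrite one_minus_X0 one_minus_X1; ring.
Qed.

Lemma square_one_minus_X2 : square_one_minus_X 2%N = 1.
Proof.
rewrite /square_one_minus_X /fps_mul !big_ord_recl big_ord0 /= /bump /=.
by rewrite one_minus_X0 one_minus_X1 one_minus_XSS; ring.
Qed.

Lemma square_one_minus_XSSS n : square_one_minus_X n.+3 = 0.
Proof.
rewrite /square_one_minus_X /fps_mul big1 // => -[[|[|i]] lt_i] _ /=.
- by rewrite one_minus_XSS mulr0.
- by rewrite (_ : (n.+3 - 1 = n.+2)%N) // one_minus_XSS mulr0.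
- by rewrite one_minus_XSS mul0r.
Qed.

Lemma inv_square_one_minus_X n : fps_inv square_one_minus_X n = n.+1%:R.
Proof.
elim/ltn_ind: n => -[|n] IH; first by rewrite /fps_inv /= square_one_minus_X0 invr1.
rewrite fps_invS square_one_minus_X0 invr1.
case: n IH => [|n] IH.
  by rewrite big_nat1 square_one_minus_X1 subnn IH //; ring.
rewrite big_nat_recl // big_nat_recl // big1_seq => [|[|i]]; rewrite ?mem_index_iota //.
  rewrite square_one_minus_X1 square_one_minus_X2 !subSS !subn0 !IH //.
  by rewrite -!natr1; ring.
by rewrite square_one_minus_XSSS mul0r.
Qed.

Lemma coef_X_div_square_one_minus_X n :
  fps_mul (fps_X R) (fps_inv square_one_minus_X) n = n%:R.
Proof. by case: n => [|n]; rewrite ?fps_mulX0 // fps_mulXS inv_square_one_minus_X. Qed.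

Lemma coef_X_div_one_minus_X_mul g n :
  fps_mul (fps_mul (fps_X R) (fps_inv one_minus_X)) g n = \sum_(i < n) g i.
Proof.
rewrite /fps_mul big_ord_recl -/(fps_mul _ _ 0%N) fps_mulX0 mul0r add0r.
rewrite (reindex_inj rev_ord_inj); apply: eq_bigr => i _ /=.
rewrite -/(fps_mul _ _ _) fps_mulXS inv_one_minus_X mul1r /bump /=.
by congr g; have := ltn_ord i; lia.
Qed.

End PowerSeries.

Section MatchboxSeries.
Variables (R : realType) (p : R) (m : nat).
Hypothesis m_gt0 : (0 < m)%N.
Local Open Scope ring_scope.
Local Notation q := (1 - p).
Hypothesis q_neq0 : q != 0.

Lemma ballot_s_coef i : ballot R m m i = s_coef R m.+1 i.+1.
Proof.
have m_neq0 : (m%:R : R) != 0 by rewrite pnatr_eq0 -lt0n.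
rewrite /s_coef succnK; case: i => [|j]; first by rewrite /ballot muln1 bin0 mulr1 divff.
rewrite /ballot; set n := (m + m.+1 * j.+1 - 1)%N.
have -> : (m.+1 * j.+2).-1 = n.+1 by rewrite /n; nia.
have n_neq0 : (n.+1%:R : R) != 0 by rewrite pnatr_eq0.
have en : (n.+1%:R : R) = m.+1%:R * j.+1%:R + m%:R by rewrite -natrM -natrD /n; congr _%:R; nia.
have eb : n.+1%:R * 'C(n, j)%:R = j.+1%:R * 'C(n.+1, j.+1)%:R :> R by rewrite -!natrM mul_bin_diag.
rewrite [in RHS]binS natrD in eb *.
set c := 'C(n, j.+1)%:R in eb *; set b := 'C(n, j)%:R in eb *.
apply: (mulfI n_neq0).
have -> : n.+1%:R * (m%:R / n.+1%:R * (c + b)) = m%:R * (c + b) :> R.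
  by rewrite mulrA mulrCA mulfV // mulr1.
have -> : n.+1%:R * (c - m%:R * b) = n.+1%:R * (c + b) - m.+1%:R * (n.+1%:R * b) :> R.
  by rewrite -natr1; ring.
by rewrite eb en -!natr1; ring.
Qed.

Definition renewal_denom : fps R :=
  fps_add (fps_const 1)
    (fps_opp (fps_scal q^-1 (fps_subst_scal (p ^+ m * q) (S_fps R m.+1)))).

Lemma renewal_denom0 : renewal_denom 0%N = 1.
Proof.
by rewrite /renewal_denom /fps_add /fps_opp /fps_scal /fps_subst_scal /S_fps /fps_const /= !mulr0 subr0.
Qed.

Lemma renewal_denomS i : renewal_denom i.+1 = - excursion p m i.+1.
Proof.
rewrite /renewal_denom /fps_add /fps_opp /fps_scal /fps_subst_scal /S_fps /fps_const /=.
rewrite add0r /first_hit ballot_s_coef; congr (- _).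
have -> : (p ^+ m * q) ^+ i.+1 = q * (p ^+ (m + m * i) * q ^+ i).
  by rewrite exprMn -exprM mulnS exprD exprS; ring.
by rewrite !mulrA mulVf // mul1r /s_coef; ring.
Qed.

Local Notation P := (fps_inv renewal_denom).

Lemma renewal0 : P 0%N = 1.
Proof. by rewrite /fps_inv /= renewal_denom0 invr1. Qed.

Lemma renewalS n : P n.+1 = \sum_(i < n.+1) excursion p m i.+1 * P (n - i)%N.
Proof.
rewrite fps_invS renewal_denom0 invr1 big_add1 /= big_mkord mulr_sumr.
by apply: eq_bigr => i _; rewrite renewal_denomS subSS mulN1r mulNr opprK.
Qed.

Lemma M_coef n : M m.+1 n p = n%:R * (m.+1%:R - q^-1) + p / q * visits P n.
Proof.
rewrite /M -(state0_nseq m_gt0) (exp_residue_state (Phi := residue_formula p m P)) ?addn0 //.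
- by rewrite /residue_formula hit_visits_at0 add0r.
- exact: residue_formula_empty.
- exact: (residue_formula_uniform (m := m) q_neq0 renewal0 renewalS).
- exact: residue_formula_step q_neq0 P.
Qed.

Lemma rhs_coef n : rhs_fps m.+1 p n = n%:R * (m.+1%:R - q^-1) + p / q * visits P n.
Proof.
rewrite /rhs_fps /fps_add /fps_scal -/one_minus_X -/square_one_minus_X.
by rewrite coef_X_div_square_one_minus_X coef_X_div_one_minus_X_mul mulrC.
Qed.

End MatchboxSeries.

Local Open Scope ring_scope.

Theorem theorem3p3 (R : realType) (k : nat) (p : R) :
  (2 <= k)%N -> 0 < p < 1 ->
  M_fps k p = rhs_fps k p.
Proof.
case: k => [//|m] m_gt0 /andP[_ p_lt1].
have q_neq0 : 1 - p != 0 by rewrite subr_eq0 eq_sym lt_eqF.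
apply: boolp.funext => -[|n]; rewrite rhs_coef //.
  by rewrite visits0 !mul0r mulr0 addr0.
exact: M_coef.
Qed.
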